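(* Let $k \ge 2$, $n \ge 1$ and $d \ge 1$ be integers, and let $f:[2k]^n \to \mathbb{R}^d$ satisfy $\|f(x_1,\ldots,x_n)\|_1 \le 1$ for all $x_1,\ldots,x_n \in [2k]$. For $0 \le \ell \le n$ and $x_1,\ldots,x_\ell \in [2k]$, let $f(x_1,\ldots,x_\ell)$ denote the average of $f(x_1,\ldots,x_n)$ over $x_{\ell+1},\ldots,x_n$ chosen uniformly and independently in $[2k]$. Suppose that for some $\varepsilon < 1/(k-1)$ the following holds for all $\ell \in [n]$, all $x_1,\ldots,x_{\ell-1} \in [2k]$ and all $r \in [k-1]$: $$\frac{1}{2k} \left\| \sum_{b=1}^r \bigl(f(x_1,\ldots,x_{\ell-1},b) + f(x_1,\ldots,x_{\ell-1},b+k)\bigr) - \sum_{b=r+1}^k \bigl(f(x_1,\ldots,x_{\ell-1},b) + f(x_1,\ldots,x_{\ell-1},b+k)\bigr) \right\|_1 \ge 1-\varepsilon.$$ Let $\delta := (k-1)\varepsilon/2$ (so $\delta < 1/2$). Then $$ d \ge 2^{(\log k - \delta \log (k-1) - H(\delta))n - 1} - \frac{1}{2}.$$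
   Context: $[m]$ denotes $\{1,\ldots,m\}$. All logarithms are base $2$. $H(\delta) := -\delta \log \delta - (1-\delta)\log(1-\delta)$ is the binary entropy function (with $0\log 0 = 0$). $\|\cdot\|_1$ is the $\ell_1$ norm on $\mathbb{R}^d$. *)

From HB Require Import structures.
From mathcomp Require Import all_boot all_order all_algebra.
From mathcomp Require Import all_classical all_reals all_analysis.
Set Implicit Arguments. Unset Strict Implicit. Unset Printing Implicit Defensive.
Import Order.TTheory GRing.Theory Num.Theory.
Local Open Scope ring_scope.

(* R : realType. Points of [2k]^n are
   x : {ffun 'I_n -> 'I_(2*k)}, with the value j : 'I_(2k) standing for j+1. *)

Definition log2 {R : realType} (x : R) : R := ln x / ln 2.

Definition xlog2x {R : realType} (x : R) : R := if x == 0 then 0 else x * log2 x.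
Definition Hbin {R : realType} (t : R) : R := - xlog2x t - xlog2x (1 - t).

Definition norm1 {R : realType} {d : nat} (v : 'rV[R]_d) : R :=
  \sum_(j < d) `|v 0 j|.

(* partial average f(x_1,...,x_m): average of f(y) over all y agreeing with
   x on the first m coordinates (0-based indices < m), the remaining n-m
   coordinates being uniform and independent in [2k]. *)
Definition pavg {R : realType} {k n d : nat}
  (f : {ffun 'I_n -> 'I_(2*k)} -> 'rV[R]_d) (m : nat) (x : {ffun 'I_n -> 'I_(2*k)})
  : 'rV[R]_d :=
  ((2 * k)%:R ^+ (n - m))^-1 *:
    \sum_(y : {ffun 'I_n -> 'I_(2*k)} | [forall j : 'I_n, (j < m)%N ==> (y j == x j)]) f y.

Definition setc {k n : nat} (x : {ffun 'I_n -> 'I_(2*k)}) (i : 'I_n) (b : 'I_(2*k))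
  : {ffun 'I_n -> 'I_(2*k)} :=
  [ffun j => if j == i then b else x j].

From HB Require Import structures.
From mathcomp Require Import all_boot all_order all_algebra.
From mathcomp Require Import all_classical all_reals all_analysis.
From mathcomp Require Import lra ring zify.
Import Order.TTheory GRing.Theory Num.Theory.
Local Open Scope ring_scope.
Set Implicit Arguments. Unset Strict Implicit. Unset Printing Implicit Defensive.

(* Each [f y] is turned into a probability distribution [mass f y] on [2d+1]
   labels.  Given a label [l] and the prefix [x_1 .. x_(i-1)], the separation
   hypothesis at level [i], summed over all cuts [r], forces the conditional mass
   of [l] on the next coordinate to concentrate on one residue class modulo [k],
   the [prediction]; hence the expected number of mispredicted coordinates is at
   most [n delta].  For a fixed label the predictions form a decision tree, so
   [\sum_x w ^+ errors x l = (2 (1 + (k-1) w))^n] exactly.  Summing over the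
   [2d+1] labels and using the convexity of [t |-> w `^ t] gives
   [k^n w^(n delta) <= (2d+1) (1 + (k-1) w)^n], and [w = delta / ((k-1)(1-delta))]
   turns this into the entropy bound. *)

Section Prefixes.
Variables k n : nat.
Local Notation X := {ffun 'I_n -> 'I_(2*k)}.

Definition prefix_eq (m : nat) (x y : X) : bool :=
  [forall j : 'I_n, (j < m)%N ==> (y j == x j)].

Lemma prefix_eqP m (x y : X) :
  reflect (forall j : 'I_n, (j < m)%N -> y j = x j) (prefix_eq m x y).
Proof.
apply: (iffP forallP) => H j; first by move=> hj; apply/eqP; have := H j; rewrite hj.
by apply/implyP => hj; apply/eqP; apply: H.
Qed.

Lemma prefix_eq_sym m (x y : X) : prefix_eq m x y = prefix_eq m y x.
Proof. by apply/prefix_eqP/prefix_eqP => H j hj; rewrite H. Qed.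

Lemma prefix_eq_trans m (x y z : X) :
  prefix_eq m x y -> prefix_eq m y z -> prefix_eq m x z.
Proof. by move=> /prefix_eqP H1 /prefix_eqP H2; apply/prefix_eqP => j hj; rewrite H2 // H1. Qed.

Lemma prefix_eqW m m' (x y : X) : (m <= m')%N -> prefix_eq m' x y -> prefix_eq m x y.
Proof. by move=> hm /prefix_eqP H; apply/prefix_eqP => j hj; apply: H; apply: leq_trans hm. Qed.

Lemma prefix_eq_setc (i : 'I_n) (x y : X) b :
  prefix_eq i.+1 (setc x i b) y = prefix_eq i x y && (y i == b).
Proof.
apply/prefix_eqP/andP => [H|[/prefix_eqP H /eqP Hb] j hj].
  split; last by rewrite H // ffunE eqxx.
  apply/prefix_eqP => j hj; rewrite H ?ffunE; last exact: ltnW.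
  by rewrite ifN // neq_ltn hj.
rewrite ffunE; case: eqP => [->//|hne]; apply: H.
by rewrite ltnS leq_eqVlt in hj; case/orP: hj => // /eqP/val_inj.
Qed.

Lemma prefix_eq_setc2 (i : 'I_n) (x y : X) b :
  prefix_eq i x y -> prefix_eq i.+1 (setc x i b) (setc y i b).
Proof.
move=> /prefix_eqP h; rewrite prefix_eq_setc ffunE !eqxx andbT.
by apply/prefix_eqP => j hj; rewrite ffunE ifN ?h // neq_ltn hj.
Qed.

Lemma big_prefix_eqS (T : Type) (idx : T) (op : Monoid.com_law idx) (i : 'I_n) x
    (F : X -> T) :
  \big[op/idx]_(y | prefix_eq i x y) F y =
  \big[op/idx]_(b : 'I_(2*k)) \big[op/idx]_(y | prefix_eq i.+1 (setc x i b) y) F y.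
Proof.
rewrite (partition_big (fun y : X => y i) predT) //=.
by apply: eq_bigr => b _; apply: eq_bigl => y; rewrite prefix_eq_setc.
Qed.

Lemma card_prefix_eq m x : (m <= n)%N ->
  #|[pred y | prefix_eq m x y]| = ((2*k) ^ (n - m))%N.
Proof.
move=> /subnKC; move: (n - m)%N => t; elim: t m x => [|t IH] m x hm.
  rewrite addn0 in hm; subst m; rewrite expn0 -[RHS](card1 x); apply: eq_card => y.
  by rewrite !inE; apply/prefix_eqP/eqP => [H|->//]; apply/ffunP => j; apply: H.
have hmn : (m < n)%N by rewrite -hm addnS ltnS leq_addr.
rewrite -sum1_card (big_prefix_eqS _ (Ordinal hmn)) /=.
under eq_bigr do rewrite sum1_card IH ?addSnnS //.
by rewrite sum_nat_const card_ord expnS.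
Qed.

Lemma sum_prefix_avg (R : realType) m (F : X -> R) : (0 < k)%N -> (m <= n)%N ->
  \sum_x F x = \sum_x ((2*k)%:R ^+ (n - m))^-1 * \sum_(y | prefix_eq m x y) F y.
Proof.
move=> hk hm; rewrite -big_distrr /= (exchange_big_dep predT) //=.
rewrite [in RHS](eq_bigr (fun y => F y * ((2*k)%:R ^+ (n-m)))).
  rewrite -big_distrl /= mulrCA mulVf ?mulr1 //.
  by rewrite expf_neq0 // pnatr_eq0 muln_eq0 /= -lt0n hk.
move=> y _; rewrite (eq_bigl (prefix_eq m y)) => [|x]; last by rewrite prefix_eq_sym.
by rewrite sumr_const -natrX -(card_prefix_eq y hm) mulr_natr.
Qed.

End Prefixes.

Section Halves.
Variable k : nat.

Let double_k : (k + k = 2 * k)%N. Proof. by rewrite mul2n addnn. Qed.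

Definition lhalf (b : 'I_k) : 'I_(2*k) := cast_ord double_k (lshift k b).
Definition rhalf (b : 'I_k) : 'I_(2*k) := cast_ord double_k (rshift k b).

Lemma big_ord_halves (R : realType) (G : 'I_(2*k) -> R) :
  \sum_b G b = \sum_(b : 'I_k) (G (lhalf b) + G (rhalf b)).
Proof.
rewrite (reindex (cast_ord double_k)) /=; last first.
  exact/onW_bij/(Bijective (cast_ordK _) (cast_ordKV _)).
by rewrite big_split_ord big_split.
Qed.

Lemma lhalf_mod (b : 'I_k) : (lhalf b %% k = b)%N.
Proof. exact: modn_small (ltn_ord b). Qed.

Lemma rhalf_mod (b : 'I_k) : (rhalf b %% k = b)%N.
Proof. by change ((k + b) %% k = b)%N; rewrite modnDl modn_small. Qed.

End Halves.

Section Labels.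
Variables (R : realType) (k n d : nat).
Local Notation X := {ffun 'I_n -> 'I_(2*k)}.
Variable f : X -> 'rV[R]_d.
Hypothesis hf : forall x, norm1 (f x) <= 1.

Definition label := (unit + 'I_d * bool)%type.

Definition mass (y : X) (l : label) : R :=
  match l with
  | inl _ => 1 - norm1 (f y)
  | inr (j, true) => Num.max (f y 0 j) 0
  | inr (j, false) => Num.max (- f y 0 j) 0
  end.

Lemma mass_ge0 y l : 0 <= mass y l.
Proof. by case: l => [_|[j []]] /=; rewrite ?subr_ge0 ?le_max ?lexx ?orbT. Qed.

Lemma sum_mass y : \sum_l mass y l = 1.
Proof.
have pos_neg (x : R) : Num.max x 0 + Num.max (- x) 0 = `|x|.
  have [h|h] := lerP 0 x.
    by rewrite ger0_norm // max_r ?addr0 // oppr_le0.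
  by rewrite ltr0_norm // max_l ?add0r // oppr_ge0 ltW.
rewrite big_sumType /= (eq_bigl (pred1 tt)) ?big_pred1_eq => [/=|[]//].
rewrite (eq_bigr (fun p => mass y (inr (p.1, p.2)))) => [|[]//].
rewrite -(pair_bigA _ (fun j b => mass y (inr (j, b)))) /=.
rewrite (eq_bigr (fun j => `|f y 0 j|)) ?subrK // => j _.
by rewrite big_bool /= pos_neg.
Qed.

Lemma mass_le1 y l : mass y l <= 1.
Proof.
rewrite -(sum_mass y) (bigD1 l) //= lerDl.
by apply: sumr_ge0 => l' _; apply: mass_ge0.
Qed.

Lemma coord_mass y j : f y 0 j = mass y (inr (j, true)) - mass y (inr (j, false)).
Proof.
rewrite /=; have [h|h] := lerP 0 (f y 0 j).
  by rewrite max_r ?subr0 // oppr_le0.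
by rewrite max_l ?sub0r ?opprK // oppr_ge0 ltW.
Qed.

Definition prefix_mass m (x : X) l : R :=
  ((2*k)%:R ^+ (n - m))^-1 * \sum_(y | prefix_eq m x y) mass y l.

Lemma prefix_mass_ge0 m x l : 0 <= prefix_mass m x l.
Proof.
rewrite /prefix_mass mulr_ge0 ?invr_ge0 ?exprn_ge0 ?ler0n //.
by apply: sumr_ge0 => y _; apply: mass_ge0.
Qed.

Lemma sum_prefix_mass m x : (0 < k)%N -> (m <= n)%N -> \sum_l prefix_mass m x l = 1.
Proof.
move=> hk hm; rewrite /prefix_mass -big_distrr /= exchange_big /=.
under eq_bigr do rewrite sum_mass.
rewrite sumr_const (_ : #|_| = ((2*k) ^ (n - m))%N); last first.
  by rewrite -(card_prefix_eq x hm); apply: eq_card => y; rewrite !inE.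
rewrite -mulr_natr mul1r natrX mulVf //.
by rewrite expf_neq0 // pnatr_eq0 muln_eq0 /= -lt0n hk.
Qed.

Lemma prefix_mass_prefix_eq m x x' l :
  prefix_eq m x x' -> prefix_mass m x l = prefix_mass m x' l.
Proof.
move=> h; rewrite /prefix_mass; congr (_ * _); apply: eq_bigl => y.
by apply/idP/idP; apply: prefix_eq_trans; rewrite // prefix_eq_sym.
Qed.

Lemma pavg_prefix_mass m x j :
  pavg f m x 0 j = prefix_mass m x (inr (j, true)) - prefix_mass m x (inr (j, false)).
Proof.
rewrite /pavg /prefix_mass mxE summxE -mulrBr -sumrB; congr (_ * _).
by apply: eq_bigr => y _; rewrite coord_mass.
Qed.

End Labels.

Lemma ler_term_sum_nat (R : realType) (a b j : nat) (Q : nat -> R) :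
  (forall i, (a <= i < b)%N -> 0 <= Q i) -> (a <= j < b)%N ->
  Q j <= \sum_(a <= i < b) Q i.
Proof.
move=> Q0 hj; rewrite (bigD1_seq j) ?iota_uniq ?mem_index_iota //= lerDl.
rewrite big_seq_cond; apply: sumr_ge0 => i /andP[hi _]; apply: Q0.
by rewrite mem_index_iota in hi.
Qed.

Section CutImbalance.
Variables (R : realType) (k m : nat) (Q : nat -> R).
Hypothesis m_lt : (m < k)%N.
Hypothesis Q_ge0 : forall b, (b < k)%N -> 0 <= Q b.
Hypothesis Q_max : forall b, (b < k)%N -> Q b <= Q m.

Local Notation S := (\sum_(0 <= b < k) Q b).

(* The cut [r] separates [Q (r - 1)] from [Q r]; whichever of the two is not the
   maximum [Q m] is counted on one side of the cut while [Q m] dominates it on the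
   other side, so it is lost twice in the imbalance. *)
Let lost r := if (r <= m)%N then Q r.-1 else Q r.

Let Q_ge0_in a b i : (b <= k)%N -> (a <= i < b)%N -> 0 <= Q i.
Proof. by move=> hb /andP[_ hi]; apply: Q_ge0; apply: leq_trans hi hb. Qed.

Lemma abs_cut_le r : (1 <= r < k)%N ->
  `|\sum_(0 <= b < k) (if (b < r)%N then Q b else - Q b)| <= S - 2 * lost r.
Proof.
move=> /andP[r1 rk]; set P := \sum_(0 <= b < r) Q b; set U := \sum_(r <= b < k) Q b.
have eS : S = P + U by rewrite (@big_cat_nat _ _ _ r) // ltnW.
have -> : \sum_(0 <= b < k) (if (b < r)%N then Q b else - Q b) = P - U.
  rewrite (@big_cat_nat _ _ _ r 0 k) ?(ltnW rk) //= -sumrN; congr (_ + _).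
    by apply: eq_big_nat => b /andP[_ ->].
  by apply: eq_big_nat => b /andP[hb _]; rewrite ltnNge hb.
have lost_P : lost r <= P.
  rewrite /lost; case: ifP => hrm.
    apply: ler_term_sum_nat => [i|]; first exact: Q_ge0_in (ltnW rk).
    by rewrite leq0n prednK ?leqnn.
  apply: le_trans (Q_max rk) _; apply: ler_term_sum_nat => [i|].
    exact: Q_ge0_in (ltnW rk).
  by rewrite ltnNge hrm.
have lost_U : lost r <= U.
  rewrite /lost; case: ifP => hrm.
    apply: le_trans (Q_max (leq_ltn_trans (leq_pred r) rk)) _.
    apply: ler_term_sum_nat => [i|]; first exact: Q_ge0_in (leqnn k).
    by rewrite hrm m_lt.
  apply: ler_term_sum_nat => [i|]; first exact: Q_ge0_in (leqnn k).
  by rewrite leqnn rk.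
by rewrite eS ler_norml; apply/andP; split; lra.
Qed.

Lemma sum_lost : \sum_(1 <= r < k) lost r = S - Q m.
Proof.
rewrite (@big_cat_nat _ _ _ m.+1) //=.
rewrite (eq_big_nat _ _ (F2 := fun r => Q r.-1)) => [|r /andP[_ hr]]; last first.
  by rewrite /lost -ltnS hr.
rewrite big_add1 /= (eq_big_nat _ _ (F2 := Q)) => [|r /andP[hr _]]; last first.
  by rewrite /lost leqNgt hr.
rewrite (@big_cat_nat _ _ _ m 0 k) ?(ltnW m_lt) //= (@big_ltn _ _ _ m k) //=.
lra.
Qed.

Lemma sum_abs_cut_le :
  \sum_(1 <= r < k) `|\sum_(0 <= b < k) (if (b < r)%N then Q b else - Q b)|
  <= (k%:R - 3) * S + 2 * Q m.
Proof.
apply: (@le_trans _ _ (\sum_(1 <= r < k) (S - 2 * lost r))).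
  by apply: ler_sum_nat => r hr; apply: abs_cut_le.
rewrite big_split /= sumrN -mulr_sumr sum_lost sumr_const_nat.
rewrite -[S *+ _]mulr_natr natrB; last exact: leq_ltn_trans (leq0n m) m_lt.
lra.
Qed.

End CutImbalance.

Section LikelyClass.
Variables (R : realType) (k : nat) (L : finType).
Hypothesis k_ge2 : (2 <= k)%N.
Let ord0k : 'I_k := Ordinal (ltnW k_ge2).

(* [a b l] is the probability of label [l] given the next coordinate [b]; the
   residue class [c] of [b] modulo [k] collects [b = c] and [b = c + k]. *)
Definition class_mass (a : 'I_(2*k) -> L -> R) l (c : 'I_k) := a (lhalf c) l + a (rhalf c) l.

Definition likely_class (a : 'I_(2*k) -> L -> R) l : 'I_k :=
  [arg max_(c > ord0k) class_mass a l c]%O.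

Variable a : 'I_(2*k) -> L -> R.
Hypothesis a_ge0 : forall b l, 0 <= a b l.
Hypothesis sum_a : forall b, \sum_l a b l = 1.

Lemma class_mass_le_likely l c : class_mass a l c <= class_mass a l (likely_class a l).
Proof. by rewrite /likely_class; case: arg_maxP => // i _; apply. Qed.

Lemma sum_class_mass : \sum_l \sum_(c : 'I_k) class_mass a l c = (2*k)%:R.
Proof.
rewrite (eq_bigr (fun l => \sum_b a b l)) => [|l _]; last by rewrite big_ord_halves.
rewrite exchange_big /=; under eq_bigr do rewrite sum_a.
by rewrite sumr_const card_ord.
Qed.

Lemma unlikely_mass (l : L) :
  \sum_b a b l * ((b %% k)%N != likely_class a l)%:R =
  \sum_(c : 'I_k) class_mass a l c - class_mass a l (likely_class a l).
Proof.
rewrite big_ord_halves (bigD1 (likely_class a l)) //= [in RHS](bigD1 (likely_class a l)) //=.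
rewrite lhalf_mod rhalf_mod eqxx !mulr0 addr0 add0r addrAC subrr add0r.
apply: eq_bigr => c hc; rewrite lhalf_mod rhalf_mod.
by rewrite (_ : (c : nat) != likely_class a l) ?mulr1.
Qed.

Lemma sum_abs_cut_class_mass_le (l : L) :
  \sum_(1 <= r < k) `|\sum_(c : 'I_k) (if (c < r)%N then class_mass a l c else - class_mass a l c)|
  <= (k%:R - 3) * \sum_(c : 'I_k) class_mass a l c + 2 * class_mass a l (likely_class a l).
Proof.
pose Q b := class_mass a l (insubd ord0k b).
have sum_Q (G : 'I_k -> R) : \sum_(c : 'I_k) G c = \sum_(0 <= b < k) G (insubd ord0k b).
  by rewrite big_mkord; apply: eq_bigr => b _; rewrite valKd.
have -> : class_mass a l (likely_class a l) = Q (likely_class a l) by rewrite /Q valKd.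
rewrite sum_Q -/Q.
rewrite (eq_big_nat _ _ (F2 := fun r =>
   `|\sum_(0 <= b < k) (if (b < r)%N then Q b else - Q b)|)) => [|r _].
  apply: sum_abs_cut_le => [||b _]; rewrite ?ltn_ord //; last first.
    by rewrite /Q valKd; apply: class_mass_le_likely.
  by move=> b _; rewrite /Q /class_mass addr_ge0.
rewrite sum_Q; congr `|_|; apply: eq_big_nat => b /andP[_ hb].
by rewrite val_insubd hb.
Qed.

Lemma sum_unlikely_mass_le eps :
  (forall r, (1 <= r)%N -> (r <= k - 1)%N ->
     (2*k)%:R * (1 - eps) <=
     \sum_l `|\sum_(c : 'I_k) (if (c < r)%N then class_mass a l c else - class_mass a l c)|) ->
  \sum_l \sum_b a b l * ((b %% k)%N != likely_class a l)%:R <= (k%:R * (k%:R - 1)) * eps.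
Proof.
move=> sep; under eq_bigr do rewrite unlikely_mass.
have cuts : \sum_(1 <= r < k) (2*k)%:R * (1 - eps) <=
    \sum_l ((k%:R - 3) * \sum_(c : 'I_k) class_mass a l c + 2 * class_mass a l (likely_class a l)).
  apply: le_trans (ler_sum _ (fun l _ => sum_abs_cut_class_mass_le l)).
  rewrite exchange_big /=; apply: ler_sum_nat => r /andP[r1 rk]; apply: sep => //.
  by rewrite leq_subRL ?addn1 // ltnW.
move: cuts; rewrite sumrB sumr_const_nat big_split /= -!mulr_sumr sum_class_mass.
set M := \sum_l _; rewrite natrM -[_ *+ (k - 1)]mulr_natr natrB ?(ltnW k_ge2) //.
nra.
Qed.

End LikelyClass.

Lemma pow_ge_powR_tangent (R : realType) (w c : R) (e : nat) : 0 < w ->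
  w `^ c * (1 + (e%:R - c) * ln w) <= w ^+ e.
Proof.
move=> w_gt0; have -> : w ^+ e = w `^ c * w `^ (e%:R - c).
  by rewrite -powRD ?(gt_eqF w_gt0) ?implybT // addrC subrK powR_mulrn // ltW.
apply: ler_wpM2l; first exact: powR_ge0.
by rewrite /powR gt_eqF // expR_ge1Dx.
Qed.

(* Convexity of [t |-> w `^ t], in the form of Jensen's inequality for the
   [p]-weighted exponents [e]; the case [w = 0] relies on [0 `^ 0 = 1]. *)
Lemma sum_pow_ge_powR (R : realType) (T : finType) (p : T -> R) (e : T -> nat) (w c : R) :
  (forall t, 0 <= p t) -> 0 <= w <= 1 ->
  \sum_t p t * (e t)%:R <= c * \sum_t p t ->
  (\sum_t p t) * w `^ c <= \sum_t p t * w ^+ e t.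
Proof.
move=> p_ge0 /andP[w_ge0 w_le1] mean.
have sum_ge0 (F : T -> R) : (forall t, 0 <= F t) -> 0 <= \sum_t p t * F t.
  by move=> F_ge0; apply: sumr_ge0 => t _; rewrite mulr_ge0.
have [w0|w_gt0] := eqVneq w 0.
  rewrite w0 /powR eqxx; have [c0|] := eqVneq c 0; last first.
    by rewrite mulr0 sum_ge0 // => t; rewrite exprn_ge0.
  rewrite mulr1n mulr1; move: mean; rewrite c0 mul0r => mean.
  apply: le_trans (_ : \sum_t p t * (1 - (e t)%:R) <= _).
    rewrite [X in _ <= X](eq_bigr (fun t => p t - p t * (e t)%:R)) => [|t _]; last first.
      by rewrite mulrBr mulr1.
    by rewrite sumrB; lra.
  apply: ler_sum => t _; rewrite ler_wpM2l // expr0n.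
  by case: (e t) => [|m]; rewrite ?subr0 // subr_le0 ler1n.
have {}w_gt0 : 0 < w by rewrite lt_neqAle eq_sym w_gt0.
set W := w `^ c; have W_ge0 : 0 <= W := powR_ge0 w c.
apply: le_trans (ler_sum _ (fun t _ => ler_wpM2l (p_ge0 t) (pow_ge_powR_tangent c (e t) w_gt0))).
rewrite [X in _ <= X](eq_bigr (fun t => W * p t + W * ln w * (p t * (e t)%:R - c * p t))).
  2: by move=> t _; rewrite /W; ring.
rewrite big_split /= -!mulr_sumr sumrB -mulr_sumr mulrC lerDl.
by rewrite mulr_le0 ?subr_le0 // mulr_ge0_le0 // ln_le0.
Qed.

Lemma norm1_le_sum_abs_label (R : realType) (d : nat) (v : 'rV[R]_d) (A : label d -> R) :
  (forall j, v 0 j = A (inr (j, true)) - A (inr (j, false))) ->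
  norm1 v <= \sum_l `|A l|.
Proof.
move=> vA; rewrite big_sumType /= -[norm1 v]add0r lerD ?sumr_ge0 //.
rewrite (eq_bigr (fun p => `|A (inr (p.1, p.2))|)) => [|[]//].
rewrite -(pair_bigA _ (fun j s => `|A (inr (j, s))|)) /=.
by apply: ler_sum => j _; rewrite big_bool vA ler_normB.
Qed.

Lemma sumrB_predC (R : realType) (T : finType) (P : pred T) (G : T -> R) :
  \sum_(b | P b) G b - \sum_(b | ~~ P b) G b = \sum_b (if P b then G b else - G b).
Proof.
rewrite [RHS](bigID P) /= -sumrN; congr (_ + _); apply: eq_bigr => b hb.
  by rewrite hb.
by rewrite (negbTE hb).
Qed.

Lemma sum_residue_weight (R : realType) (k : nat) (c : 'I_k) (w : R) :
  \sum_(b : 'I_(2*k)) (if (b %% k)%N == c then 1 else w) = 2 * (1 + (k - 1)%:R * w).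
Proof.
rewrite big_ord_halves (eq_bigr (fun b : 'I_k => 2 * (if b == c then 1 else w))).
  rewrite -big_distrr (bigD1 c) //= eqxx (eq_bigr (fun _ => w)) => [|b /negbTE -> //].
  rewrite sumr_const [_%:R * w]mulr_natl; congr (_ * (_ + _ *+ _)).
  by transitivity #|predC1 c|; [apply: eq_card | rewrite cardC1 card_ord subn1].
move=> b _; rewrite lhalf_mod rhalf_mod.
by have -> : ((b : nat) == c) = (b == c) by []; rewrite mulr_natl mulr2n.
Qed.

Section Predictions.
Variables (R : realType) (k n d : nat).
Local Notation X := {ffun 'I_n -> 'I_(2*k)}.
Variable f : X -> 'rV[R]_d.
Hypothesis hf : forall x, norm1 (f x) <= 1.
Hypothesis k_ge2 : (2 <= k)%N.
Let k_gt0 : (0 < k)%N := ltnW k_ge2.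
Local Notation N := ((2*k)%:R : R).

Let N_gt0 : 0 < N.
Proof. by rewrite ltr0n muln_gt0 k_gt0. Qed.

(* With values counted from [0], [cut r] is the paper's [{1..r} U {k+1..k+r}] and
   [separated eps] is the hypothesis of the theorem. *)
Definition cut (r : nat) (b : 'I_(2*k)) : bool := (b < r)%N || (k <= b < k + r)%N.

Definition separated (eps : R) :=
  forall (i : 'I_n) (x : X) (r : nat), (1 <= r)%N -> (r <= k - 1)%N ->
  (2 * k)%:R^-1 * norm1 (\sum_(b | cut r b) pavg f i.+1 (setc x i b)
                         - \sum_(b | ~~ cut r b) pavg f i.+1 (setc x i b)) >= 1 - eps.

Definition next_mass (i : 'I_n) (x : X) (b : 'I_(2*k)) (l : label d) : R :=
  prefix_mass f i.+1 (setc x i b) l.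

Definition prediction (i : 'I_n) (x : X) (l : label d) : 'I_k :=
  likely_class k_ge2 (next_mass i x) l.

Lemma next_mass_prefix_eq (i : 'I_n) (x y : X) :
  prefix_eq i x y -> next_mass i x = next_mass i y.
Proof.
move=> h; apply: funext => b; apply: funext => l.
exact/prefix_mass_prefix_eq/prefix_eq_setc2.
Qed.

Lemma prediction_prefix_eq (i : 'I_n) (x y : X) l :
  prefix_eq i x y -> prediction i x l = prediction i y l.
Proof. by move=> h; rewrite /prediction (next_mass_prefix_eq h). Qed.

Lemma cut_lhalf r (c : 'I_k) : cut r (lhalf c) = (c < r)%N.
Proof. by rewrite /cut /=; have := ltn_ord c; lia. Qed.

Lemma cut_rhalf r (c : 'I_k) : cut r (rhalf c) = (c < r)%N.
Proof. by rewrite /cut /=; lia. Qed.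

Lemma separated_class_mass eps (i : 'I_n) (x : X) r :
  separated eps -> (1 <= r)%N -> (r <= k - 1)%N ->
  N * (1 - eps) <= \sum_l
    `|\sum_(c : 'I_k) (if (c < r)%N then class_mass (next_mass i x) l c
                       else - class_mass (next_mass i x) l c)|.
Proof.
move=> sep r1 rk; have := sep i x r r1 rk.
rewrite -(ler_pM2l N_gt0) mulrA mulfV ?mul1r ?gt_eqF // => /le_trans; apply.
pose A l := \sum_b (if cut r b then next_mass i x b l else - next_mass i x b l).
have A_class l : A l = \sum_(c : 'I_k)
    (if (c < r)%N then class_mass (next_mass i x) l c else - class_mass (next_mass i x) l c).
  rewrite /A big_ord_halves; apply: eq_bigr => c _.
  by rewrite cut_lhalf cut_rhalf /class_mass; case: ifP => _; rewrite ?opprD.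
rewrite (eq_bigr (fun l => `|A l|)) => [|l _]; last by rewrite A_class.
apply: norm1_le_sum_abs_label => j.
rewrite !mxE !summxE sumrB_predC /A -sumrB; apply: eq_bigr => b _.
by rewrite pavg_prefix_mass; case: ifP => _ //; rewrite opprD opprK.
Qed.

Definition mispredicted (i : 'I_n) (x : X) (l : label d) : bool :=
  (x i %% k)%N != prediction i x l.

Lemma prefix_mispredicted_le eps (i : 'I_n) (x : X) : separated eps ->
  \sum_(y | prefix_eq i x y) \sum_l mass f y l * (mispredicted i y l)%:R
  <= N ^+ (n - i.+1) * (k%:R * (k%:R - 1) * eps).
Proof.
move=> sep; have N_neq0 : N != 0 by rewrite gt_eqF.
rewrite (eq_bigr (fun y => \sum_l mass f y l * ((y i %% k)%N != prediction i x l)%:R)); last first.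
  by move=> y h; apply: eq_bigr => l _; rewrite /mispredicted (prediction_prefix_eq l h).
rewrite exchange_big /=.
rewrite (eq_bigr (fun l => N ^+ (n - i.+1) *
    \sum_b next_mass i x b l * ((b %% k)%N != prediction i x l)%:R)) => [|l _]; last first.
  rewrite (big_prefix_eqS _ i) mulr_sumr; apply: eq_bigr => b _.
  rewrite (eq_bigr (fun y => mass f y l * ((b %% k)%N != prediction i x l)%:R)); last first.
    by move=> y; rewrite prefix_eq_setc => /andP[_ /eqP ->].
  by rewrite -big_distrl /= mulrA /next_mass /prefix_mass mulrA mulfV ?mul1r ?expf_neq0.
rewrite -mulr_sumr; apply: ler_wpM2l; first exact: exprn_ge0 (ltW N_gt0).
apply: sum_unlikely_mass_le => [b l|b|r r1 rk]; first exact: prefix_mass_ge0.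
  exact: sum_prefix_mass.
exact: separated_class_mass.
Qed.

Lemma sum_mispredicted_le eps (i : 'I_n) : separated eps ->
  \sum_x \sum_l mass f x l * (mispredicted i x l)%:R <= N ^+ n * ((k - 1)%:R * eps / 2).
Proof.
move=> sep; rewrite (sum_prefix_avg _ k_gt0 (ltnW (ltn_ord i))).
apply: (@le_trans _ _ (\sum_(x : X)
    (N ^+ (n - i))^-1 * (N ^+ (n - i.+1) * (k%:R * (k%:R - 1) * eps)))).
  apply: ler_sum => x _; apply: ler_wpM2l; last exact: prefix_mispredicted_le.
  by rewrite invr_ge0 exprn_ge0 // ltW.
rewrite sumr_const card_ffun !card_ord -(subnSK (ltn_ord i)) exprS -[_ *+ _]mulr_natr natrX.
set P := N ^+ (n - i.+1); rewrite natrB ?(ltnW k_ge2) // natrM.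
have P_neq0 : P != 0 by rewrite expf_neq0 ?gt_eqF.
rewrite le_eqVlt; apply/orP; left; apply/eqP; field.
by rewrite P_neq0 pnatr_eq0 -lt0n k_gt0.
Qed.

Lemma separated_eps_ge0 eps : (0 < n)%N -> separated eps -> 0 <= eps.
Proof.
move=> n_gt0 sep; have := sum_mispredicted_le (Ordinal n_gt0) sep.
have sum_ge0 : 0 <= \sum_x \sum_l mass f x l * (mispredicted (Ordinal n_gt0) x l)%:R.
  by do 2!apply: sumr_ge0 => ? _; rewrite mulr_ge0 ?mass_ge0.
move=> /(le_trans sum_ge0); rewrite pmulr_rge0 ?exprn_gt0 //.
have : 0 < (k - 1)%:R :> R by rewrite ltr0n subn_gt0.
nra.
Qed.

Definition errors (x : X) (l : label d) : nat := \sum_(i : 'I_n) mispredicted i x l.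

Lemma sum_errors_le eps : separated eps ->
  \sum_x \sum_l mass f x l * (errors x l)%:R <= n%:R * ((k - 1)%:R * eps / 2) * N ^+ n.
Proof.
move=> sep.
rewrite (eq_bigr (fun x => \sum_i \sum_l mass f x l * (mispredicted i x l)%:R)); last first.
  move=> x _; rewrite exchange_big /=; apply: eq_bigr => l _.
  by rewrite /errors natr_sum mulr_sumr.
rewrite exchange_big /=; apply: le_trans (ler_sum _ (fun i _ => sum_mispredicted_le i sep)) _.
rewrite sumr_const card_ord -[_ *+ n]mulr_natl le_eqVlt; apply/orP; left; apply/eqP.
ring.
Qed.

Section ErrorWeights.
Variables (l : label d) (w : R).
Local Notation C := (2 * (1 + (k - 1)%:R * w)).

Definition error_weight (i : 'I_n) (x : X) : R := if mispredicted i x l then w else 1.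

(* Given the prefix, the prediction is fixed, so exactly two of the [2k] values of
   the next coordinate carry weight [1] and the others carry weight [w]. *)
Lemma sum_prefix_error_weight (i : 'I_n) (x : X) :
  \sum_(y | prefix_eq i x y) error_weight i y = N ^+ (n - i.+1) * C.
Proof.
rewrite (big_prefix_eqS _ i) -(sum_residue_weight (prediction i x l)) mulr_sumr.
apply: eq_bigr => b _.
rewrite (eq_bigr (fun _ => if (b %% k)%N == prediction i x l then 1 else w)); last first.
  move=> y; rewrite prefix_eq_setc => /andP[hy /eqP <-].
  by rewrite /error_weight /mispredicted (prediction_prefix_eq l hy); case: eqP.
rewrite sumr_const (_ : #|_| = ((2*k) ^ (n - i.+1))%N) ?card_prefix_eq //.
by rewrite -[_ *+ _]mulr_natr natrX mulrC.
Qed.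

Lemma sum_prod_error_weight m : (m <= n)%N ->
  \sum_x \prod_(i : 'I_n | (i < m)%N) error_weight i x = C ^+ m * N ^+ (n - m).
Proof.
elim: m => [_|m IH m_lt].
  under eq_bigr do rewrite big_pred0 //.
  by rewrite sumr_const card_ffun !card_ord -[_ *+ _]mulr_natr mul1r natrX expr0 mul1r subn0.
pose im := Ordinal m_lt; pose G x := \prod_(i : 'I_n | (i < m)%N) error_weight i x.
have G_prefix x y : prefix_eq m x y -> G y = G x.
  move=> h; apply: eq_bigr => i hi; rewrite /error_weight /mispredicted.
  rewrite (prediction_prefix_eq l (prefix_eqW (ltnW hi) h)).
  by rewrite ((prefix_eqP _ _ _ h) i hi).
rewrite (eq_bigr (fun x => G x * error_weight im x)) => [|x _]; last first.
  rewrite (bigD1 im) //= mulrC; congr (_ * _); apply: eq_bigl => i.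
  by rewrite -(inj_eq val_inj) /= ltnS ltn_neqAle andbC.
rewrite (sum_prefix_avg _ k_gt0 (ltnW m_lt)).
under eq_bigr => x _.
  rewrite (eq_bigr (fun y => G x * error_weight im y)) => [|y /G_prefix -> //].
  rewrite -mulr_sumr (sum_prefix_error_weight im) mulrCA.
  over.
rewrite /= -big_distrl /= IH 1?ltnW // -(subnSK m_lt) !exprS.
have N_neq0 : N != 0 by rewrite gt_eqF.
by field; rewrite expf_neq0 // pnatr_eq0 -lt0n k_gt0.
Qed.

Lemma sum_pow_errors : \sum_x w ^+ errors x l = C ^+ n.
Proof.
have := sum_prod_error_weight (leqnn n); rewrite subnn expr0 mulr1 => <-.
apply: eq_bigr => x _; rewrite /errors -prodrXr.
by apply: eq_big => [i|i _]; rewrite ?ltn_ord // /error_weight; case: mispredicted.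
Qed.

End ErrorWeights.

Lemma sum_total_mass : \sum_(x : X) \sum_l mass f x l = N ^+ n.
Proof.
under eq_bigr do rewrite sum_mass.
by rewrite sumr_const card_ffun !card_ord -[_ *+ _]mulr_natr mul1r natrX.
Qed.

Lemma sum_mass_pow_errors_le (w : R) : 0 <= w ->
  \sum_x \sum_l mass f x l * w ^+ errors x l
  <= (2 * d + 1)%:R * (2 * (1 + (k - 1)%:R * w)) ^+ n.
Proof.
move=> w_ge0; apply: (@le_trans _ _ (\sum_x \sum_(l : label d) w ^+ errors x l)).
  do 2!apply: ler_sum => ? _.
  by rewrite ler_piMl ?exprn_ge0 ?mass_le1.
rewrite exchange_big /=; under eq_bigr do rewrite sum_pow_errors.
rewrite sumr_const -[_ *+ #|_|]mulr_natl (_ : #|_| = (2 * d + 1)%N) //.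
transitivity #|{: label d}|; first exact: eq_card.
by rewrite card_sum card_unit card_prod card_ord card_bool addnC mulnC.
Qed.

Lemma dimension_tradeoff (w c : R) : 0 <= w <= 1 ->
  \sum_x \sum_l mass f x l * (errors x l)%:R <= c * N ^+ n ->
  k%:R ^+ n * w `^ c <= (2 * d + 1)%:R * (1 + (k - 1)%:R * w) ^+ n.
Proof.
move=> /[dup] /andP[w_ge0 _] w01 err.
have convex : N ^+ n * w `^ c <= \sum_x \sum_l mass f x l * w ^+ errors x l.
  move: err; rewrite -sum_total_mass !pair_bigA => err.
  by apply: sum_pow_ge_powR => // t; apply: mass_ge0.
have := le_trans convex (sum_mass_pow_errors_le w_ge0).
by rewrite natrM !exprMn -mulrA [X in _ <= X]mulrCA ler_pM2l ?exprn_gt0.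
Qed.

End Predictions.

Lemma Hbin0 (R : realType) : Hbin (0 : R) = 0.
Proof.
by rewrite /Hbin /xlog2x eqxx (_ : 1 - 0 = 1 :> R) ?subr0 // oner_eq0 /log2 ln1 mul0r mulr0; lra.
Qed.

Lemma powR2_entropy_rate (R : realType) (a K delta : R) (n : nat) :
  0 < a -> 0 < K -> 0 <= delta < 1 ->
  let w := delta / (K * (1 - delta)) in
  a ^+ n * w `^ (n%:R * delta) =
  2 `^ ((log2 a - delta * log2 K - Hbin delta) * n%:R) * (1 + K * w) ^+ n.
Proof.
move=> a_gt0 K_gt0 /andP[d_ge0 d_lt1] w.
have omd_gt0 : 0 < 1 - delta by rewrite subr_gt0.
have Kw : 1 + K * w = (1 - delta)^-1.
  by rewrite /w; field; rewrite !gt_eqF.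
have ln2_gt0 : 0 < ln (2 : R) by rewrite ln_gt0 ?ltr1n.
have [d0|d_neq0] := eqVneq delta 0.
  rewrite /w d0 !mul0r !mulr0 powRr0 Hbin0 !subr0 addr0 expr1n !mulr1.
  rewrite /powR pnatr_eq0 /= /log2 mulrAC mulfVK ?gt_eqF //.
  by rewrite mulrC expRM_natl lnK ?posrE.
have d_gt0 : 0 < delta by rewrite lt_neqAle eq_sym d_neq0.
have w_gt0 : 0 < w by rewrite divr_gt0 ?mulr_gt0.
apply: ln_inj; rewrite ?posrE ?mulr_gt0 ?exprn_gt0 ?powR_gt0 ?Kw ?invr_gt0 //.
rewrite !lnM ?posrE ?exprn_gt0 ?powR_gt0 ?invr_gt0 // !lnXn ?invr_gt0 // !ln_powR.
rewrite lnV ?posrE // /w ln_div ?posrE ?mulr_gt0 // lnM ?posrE //.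
rewrite -[ln a *+ n]mulr_natl -[- ln (1 - delta) *+ n]mulr_natl.
rewrite /Hbin /xlog2x (negbTE d_neq0) (gt_eqF omd_gt0) /log2.
by field; rewrite gt_eqF.
Qed.

Unset Implicit Arguments.

Theorem theorem2 (R : realType) (k n d : nat)
  (hk : (2 <= k)%N) (hn : (1 <= n)%N) (hd : (1 <= d)%N)
  (f : {ffun 'I_n -> 'I_(2*k)} -> 'rV[R]_d)
  (hf : forall x, norm1 (f x) <= 1)
  (eps : R) (heps : eps < 1 / (k - 1)%:R)
  (hyp : forall (i : 'I_n) (x : {ffun 'I_n -> 'I_(2*k)}) (r : nat),
     (1 <= r)%N -> (r <= k - 1)%N ->
     (2 * k)%:R^-1 * norm1
       (\sum_(b : 'I_(2*k) | ((b < r)%N || ((k <= b)%N && (b < k + r)%N)))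
           pavg f i.+1 (setc x i b)
        - \sum_(b : 'I_(2*k) | ~~ ((b < r)%N || ((k <= b)%N && (b < k + r)%N)))
           pavg f i.+1 (setc x i b))
     >= 1 - eps) :
  let delta := (k - 1)%:R * eps / 2 in
  (d%:R : R) >= 2 `^ ((log2 (k%:R : R) - delta * log2 ((k - 1)%:R : R) - Hbin delta)
                        * n%:R - 1) - 1 / 2.
Proof.
cbv zeta; set delta := (k - 1)%:R * eps / 2; set K := ((k - 1)%:R : R).
have K_ge1 : 1 <= K by rewrite ler1n subn_gt0.
have K_gt0 : 0 < K by lra.
have delta_ge0 : 0 <= delta.
  by rewrite !mulr_ge0 ?invr_ge0 ?ler0n // (separated_eps_ge0 hf hk hn hyp).
have delta_lt : delta < 1 / 2.
  by move: heps; rewrite ltr_pdivlMr // -/K => ?; rewrite /delta -/K; lra.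
set w := delta / (K * (1 - delta)).
have w01 : 0 <= w <= 1.
  have omd_gt0 : 0 < 1 - delta by lra.
  have den_gt0 : 0 < K * (1 - delta) by rewrite mulr_gt0.
  by rewrite divr_ge0 ?(ltW den_gt0) //= ler_pdivrMr // mul1r; nra.
have Kw_gt0 : 0 < 1 + K * w by case/andP: w01 => w_ge0 _; nra.
have := dimension_tradeoff hf w01 (sum_errors_le hf hk hyp).
rewrite (powR2_entropy_rate n _ K_gt0) ?ltr0n ?(ltnW hk) ?delta_ge0 //=; last lra.
rewrite -/w -/K ler_pM2r ?exprn_gt0 // => rate.
rewrite powRB ?pnatr_eq0 ?implybT // powRr1 ?ler0n //.
by move: rate; rewrite natrD natrM; lra.
Qed.
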